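(* Let $V$ and $W$ be separable real Hilbert spaces with inner products $a(\cdot,\cdot)$ and $b(\cdot,\cdot)$ and induced norms $\|\cdot\|_a$, $\|\cdot\|_b$, and let $\gamma:V\to W$ be a compact linear operator. Let $V_h$ be a finite-dimensional space with $\dim V_h=d$, such that $V$ and $V_h$ are subspaces of a common real vector space, and set $V(h):=V+V_h$. Let $\widehat a(\cdot,\cdot)$ be a symmetric positive semidefinite bilinear form on $V(h)$ whose restriction to $V_h$ is an inner product and which satisfies $\widehat a(u,v)=a(u,v)$ for all $u,v\in V$; write $\|v\|_a:=\widehat a(v,v)^{1/2}$ for $v\in V(h)$ (a seminorm). Let $\widehat\gamma:V(h)\to W$ be a (compact) linear operator with $\widehat\gamma u=\gamma u$ for $u\in V$. Define $P_h:V(h)\to V_h$ by $\widehat a(u-P_hu,v_h)=0$ for all $v_h\in V_h$. Define, for $k\ge 1$ (with $k\le \dim V$), $$\mu_k:=\sup_{H_k\subset V,\ \dim H_k=k}\ \inf_{v\in H_k\setminus\{0\}}\frac{b(\gamma v,\gamma v)}{a(v,v)},$$ and for $1\le k\le d$, $$\mu_{k,h}:=\max_{H_{k,h}\subset V_h,\ \dim H_{k,h}=k}\ \min_{v_h\in H_{k,h}\setminus\{0\}}\frac{b(\widehat\gamma v_h,\widehat\gamma v_h)}{\widehat a(v_h,v_h)},$$ so that $\mu_{1,h}\ge\cdots\ge\mu_{d',h}>\mu_{d'+1,h}=\cdots=\mu_{d,h}=0$ for some $d'\le d$. Suppose there is a number $C_h\ge 0$ such that $$\|\widehat\gamma(I-P_h)v\|_b\le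 C_h\,\|(I-P_h)v\|_a\qquad\forall v\in V(h).$$ Then $\mu_k\le \mu_{k,h}+C_h^2$ for $k=1,\dots,d$ (with $k\le\dim V$). Consequently, writing $\lambda_k:=1/\mu_k$ (with $\lambda_k:=+\infty$ if $\mu_k=0$) and $\lambda_{k,h}:=1/\mu_{k,h}$ for $1\le k\le d'$, $$\lambda_k\ \ge\ \frac{\lambda_{k,h}}{1+C_h^2\lambda_{k,h}},\qquad k=1,\dots,d'.$$ No positive definiteness of $\widehat a$ on $V(h)$ is assumed.
   Context: The numbers $\mu_k$ are the eigenvalues (in nonincreasing order, with multiplicity, possibly including $0$) of the compact self-adjoint positive semidefinite operator $G\gamma:V\to V$, where $G:W\to V$ is defined by $a(Gf,v)=b(f,\gamma v)$ for all $v\in V$; equivalently they are the eigenvalues $\mu$ of $b(\gamma u,\gamma v)=\mu\,a(u,v)$ for all $v\in V$, and $\lambda_k=1/\mu_k$ are the eigenvalues of $a(u,v)=\lambda\, b(\gamma u,\gamma v)$. The $\mu_{k,h}$ are the eigenvalues of the discrete problem $b(\widehat\gamma u_h,\widehat\gamma v_h)=\mu_h\widehat a(u_h,v_h)$ for all $v_h\in V_h$. *)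

From HB Require Import structures.
From mathcomp Require Import all_boot all_order all_algebra.
From mathcomp Require Import classical_sets reals constructive_ereal.
Set Implicit Arguments. Unset Strict Implicit. Unset Printing Implicit Defensive.
Import Order.TTheory GRing.Theory Num.Theory.
Local Open Scope ring_scope.
Local Open Scope classical_set_scope.

Section Defs.
Variable R : realType.

Definition subspace (X : lmodType R) (S : set X) :=
  S 0 /\ forall (c : R) u v, S u -> S v -> S (c *: u + v).

Definition sumset (X : lmodType R) (S T : set X) : set X :=
  fun z => exists u w, S u /\ T w /\ z = u + w.

Definition symmetric_on (X : lmodType R) (S : set X) (f : X -> X -> R) :=
  forall u v, S u -> S v -> f u v = f v u.

(* linearity in the first argument (with symmetry: bilinear) *)
Definition bilinear_on (X : lmodType R) (S : set X) (f : X -> X -> R) :=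
  forall (c : R) u v w, S u -> S v -> S w -> f (c *: u + v) w = c * f u w + f v w.

Definition psd_on (X : lmodType R) (S : set X) (f : X -> X -> R) :=
  forall u, S u -> 0 <= f u u.

Definition inner_product_on (X : lmodType R) (S : set X) (f : X -> X -> R) :=
  [/\ symmetric_on S f, bilinear_on S f & forall u, S u -> u != 0 -> 0 < f u u].

Definition linear_on (X Y : lmodType R) (S : set X) (g : X -> Y) :=
  forall (c : R) u v, S u -> S v -> g (c *: u + v) = c *: g u + g v.

Definition fnorm (X : lmodType R) (f : X -> X -> R) (u : X) : R := Num.sqrt (f u u).

Definition cauchy_in (X : lmodType R) (f : X -> X -> R) (u : nat -> X) :=
  forall e : R, 0 < e -> exists N, forall m n, (N <= m)%N -> (N <= n)%N ->
    fnorm f (u m - u n) < e.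

Definition converges_to (X : lmodType R) (f : X -> X -> R) (u : nat -> X) (x : X) :=
  forall e : R, 0 < e -> exists N, forall n, (N <= n)%N -> fnorm f (u n - x) < e.

Definition complete_on (X : lmodType R) (S : set X) (f : X -> X -> R) :=
  forall u : nat -> X, (forall n, S (u n)) -> cauchy_in f u ->
    exists2 x, S x & converges_to f u x.

Definition separable_on (X : lmodType R) (S : set X) (f : X -> X -> R) :=
  exists s : nat -> X, (forall n, S (s n)) /\
    forall x, S x -> forall e : R, 0 < e -> exists n, fnorm f (x - s n) < e.

Definition compact_on (X Y : lmodType R) (S : set X) (f : X -> X -> R)
    (g : X -> Y) (bY : Y -> Y -> R) :=
  forall u : nat -> X, (forall n, S (u n)) ->
    (exists M : R, forall n, fnorm f (u n) <= M) ->
    exists phi : nat -> nat, (forall n, (phi n < phi n.+1)%N) /\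
      exists y : Y, converges_to bY (fun n => g (u (phi n))) y.

Definition independent (X : lmodType R) (k : nat) (e : 'I_k -> X) :=
  forall c : 'I_k -> R, \sum_(i < k) c i *: e i = 0 -> forall i, c i = 0.

(* e spans a k-dimensional subspace of S *)
Definition dim_family (X : lmodType R) (S : set X) (k : nat) (e : 'I_k -> X) :=
  (forall i, S (e i)) /\ independent e.

Definition basis_of_set (X : lmodType R) (S : set X) (k : nat) (e : 'I_k -> X) :=
  dim_family S e /\
  forall x, S x -> exists c : 'I_k -> R, x = \sum_(i < k) c i *: e i.

Definition rayleigh_inf (X Y : lmodType R) (A : X -> X -> R) (g : X -> Y)
    (b : Y -> Y -> R) (k : nat) (e : 'I_k -> X) : R :=
  inf [set r : R | exists c : 'I_k -> R,
        let v := \sum_(i < k) c i *: e i in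
        v != 0 /\ r = b (g v) (g v) / A v v].

Definition minmax (X Y : lmodType R) (S : set X) (A : X -> X -> R) (g : X -> Y)
    (b : Y -> Y -> R) (k : nat) : R :=
  sup [set rayleigh_inf A g b e | e in [set e : 'I_k -> X | dim_family S e]].

Definition recip_ext (m : R) : \bar R :=
  if m == 0 then +oo%E else (m^-1)%:E.

End Defs.

From HB Require Import structures.
From mathcomp Require Import all_boot all_order all_algebra.
From mathcomp Require Import boolp classical_sets reals constructive_ereal.
From mathcomp Require Import ring lra.
Import Order.TTheory GRing.Theory Num.Theory.
Local Open Scope ring_scope.
Local Open Scope classical_set_scope.
Set Implicit Arguments. Unset Strict Implicit. Unset Printing Implicit Defensive.

(* Let H be a k-dimensional subspace of V. If P_h kills some nonzero v in H,
   then v = (I - P_h) v and the hypothesis gives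
   b(gamma v, gamma v) <= C_h^2 a(v, v). Otherwise P_h maps H onto a
   k-dimensional subspace of V_h. Splitting v = P_h v + w with
   w = (I - P_h) v orthogonal to V_h for a_hat gives
   a(v, v) = a_hat(P_h v, P_h v) + a_hat(w, w), while the Cauchy-Schwarz
   inequality for b and the bound on b(gamma_hat w, gamma_hat w) make the
   Rayleigh quotient of v at most that of P_h v plus C_h^2. Taking the infimum
   over H and the supremum over all H gives mu_k <= mu_{k,h} + C_h^2. *)

Section Subspace.
Variables (R : realType) (X : lmodType R).

Lemma subspaceT : subspace (@setT X).
Proof. by []. Qed.

Lemma subspaceD (S : set X) u v : subspace S -> S u -> S v -> S (u + v).
Proof. by case=> _ hS Su Sv; have := hS 1 u v Su Sv; rewrite scale1r. Qed.

Lemma subspaceZ (S : set X) c u : subspace S -> S u -> S (c *: u).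
Proof. by case=> S0 hS Su; have := hS c u 0 Su S0; rewrite addr0. Qed.

Lemma subspaceB (S : set X) u v : subspace S -> S u -> S v -> S (u - v).
Proof.
move=> hS Su Sv; have := subspaceD hS (subspaceZ (-1) hS Sv) Su.
by rewrite scaleN1r addrC.
Qed.

Lemma subspace_sum (S : set X) (I : Type) (r : seq I) (c : I -> R) (e : I -> X) :
  subspace S -> (forall i, S (e i)) -> S (\sum_(i <- r) c i *: e i).
Proof.
move=> hS Se; elim: r => [|i r IH]; first by rewrite big_nil; case: hS.
by rewrite big_cons; apply: subspaceD => //; apply: subspaceZ.
Qed.

Lemma subspace_sumset (S T : set X) :
  subspace S -> subspace T -> subspace (sumset S T).
Proof.
move=> [S0 hS] [T0 hT]; split; first by exists 0, 0; rewrite addr0.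
move=> c z1 z2 [u1 [w1 [Su1 [Tw1 ->]]]] [u2 [w2 [Su2 [Tw2 ->]]]].
exists (c *: u1 + u2), (c *: w1 + w2); do 2?split; [exact: hS | exact: hT |].
by rewrite scalerDr addrACA.
Qed.

Lemma sumsetl (S T : set X) : subspace T -> S `<=` sumset S T.
Proof. by case=> T0 _ u Su; exists u, 0; rewrite addr0. Qed.

Lemma sumsetr (S T : set X) : subspace S -> T `<=` sumset S T.
Proof. by case=> S0 _ u Tu; exists 0, u; rewrite add0r. Qed.

End Subspace.

Section Forms.
Variables (R : realType) (X : lmodType R) (S : set X) (f : X -> X -> R).
Hypotheses (hS : subspace S) (fsym : symmetric_on S f) (fbil : bilinear_on S f).

Lemma bil0l w : S w -> f 0 w = 0.
Proof.
move=> Sw; have S0 : S 0 by case: hS.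
have := fbil 1 S0 S0 Sw; rewrite scale1r addr0 mul1r.
by move=> /(congr1 (fun x => x - f 0 w)); rewrite subrr addrK.
Qed.

Lemma bilDl u v w : S u -> S v -> S w -> f (u + v) w = f u w + f v w.
Proof. by move=> Su Sv Sw; have := fbil 1 Su Sv Sw; rewrite scale1r mul1r. Qed.

Lemma bilZl c u w : S u -> S w -> f (c *: u) w = c * f u w.
Proof.
move=> Su Sw; have S0 : S 0 by case: hS.
by have := fbil c Su S0 Sw; rewrite addr0 bil0l // addr0.
Qed.

Lemma bilBl u v w : S u -> S v -> S w -> f (u - v) w = f u w - f v w.
Proof.
move=> Su Sv Sw; have SNv : S (- v) by rewrite -scaleN1r; apply: subspaceZ.
by rewrite bilDl // -scaleN1r bilZl // mulN1r.
Qed.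

Lemma bilDr u v w : S u -> S v -> S w -> f w (u + v) = f w u + f w v.
Proof.
move=> Su Sv Sw; rewrite fsym //; last exact: subspaceD.
by rewrite bilDl // (fsym Su) // (fsym Sv).
Qed.

Lemma bilZr c u w : S u -> S w -> f w (c *: u) = c * f w u.
Proof.
move=> Su Sw; rewrite fsym //; last exact: subspaceZ.
by rewrite bilZl // fsym.
Qed.

Lemma bil_sqD u v : S u -> S v ->
  f (u + v) (u + v) = f u u + 2 * f u v + f v v.
Proof.
move=> Su Sv; have Suv := subspaceD hS Su Sv.
rewrite bilDl // !bilDr // (fsym Sv Su); ring.
Qed.

Lemma bil_sqZ c u : S u -> f (c *: u) (c *: u) = c ^+ 2 * f u u.
Proof.
move=> Su; rewrite bilZl //; last exact: subspaceZ.
by rewrite bilZr // mulrA expr2.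
Qed.

Section Psd.
Hypothesis fpsd : psd_on S f.

(* Expand f(s u - t v, s u - t v) >= 0. *)
Lemma psd_cross_le s t u v : S u -> S v ->
  2 * s * t * f u v <= s ^+ 2 * f u u + t ^+ 2 * f v v.
Proof.
move=> Su Sv.
have Ssu : S (s *: u) by apply: subspaceZ.
have Stv : S ((- t) *: v) by apply: subspaceZ.
have := fpsd (subspaceD hS Ssu Stv).
rewrite bil_sqD // !bil_sqZ // bilZl // bilZr // sqrrN; lra.
Qed.

Lemma psd_sqD_le u v : S u -> S v ->
  f (u + v) (u + v) <= 2 * f u u + 2 * f v v.
Proof.
move=> Su Sv; have := psd_cross_le 1 1 Su Sv.
rewrite bil_sqD // expr1n !mul1r mulr1; lra.
Qed.

End Psd.
End Forms.

Lemma inner_product_psd (R : realType) (X : lmodType R) (S : set X) f :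
  subspace S -> inner_product_on S f -> psd_on S f.
Proof.
move=> hS [_ fbil fpos] u Su; have [->|u0] := eqVneq u 0.
  by rewrite (bil0l hS fbil) //; case: hS.
exact/ltW/fpos.
Qed.

Lemma inner_product_sq_ge0 (R : realType) (X : lmodType R) (f : X -> X -> R) :
  inner_product_on setT f -> forall x, 0 <= f x x.
Proof. by move=> fip x; apply: (inner_product_psd (subspaceT X) fip). Qed.

Section LinearOn.
Variables (R : realType) (X Y : lmodType R) (S : set X) (g : X -> Y).
Hypotheses (hS : subspace S) (glin : linear_on S g).

Lemma lin_on0 : g 0 = 0.
Proof.
have S0 : S 0 by case: hS.
have := glin 1 S0 S0; rewrite !scale1r addr0.
by move=> /(congr1 (fun x => x - g 0)); rewrite subrr addrK.
Qed.

Lemma lin_onD u v : S u -> S v -> g (u + v) = g u + g v.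
Proof. by move=> Su Sv; have := glin 1 Su Sv; rewrite !scale1r. Qed.

Lemma lin_onZ c u : S u -> g (c *: u) = c *: g u.
Proof.
move=> Su; have S0 : S 0 by case: hS.
by have := glin c Su S0; rewrite !addr0 lin_on0 addr0.
Qed.

Lemma lin_on_sum (I : Type) (r : seq I) (c : I -> R) (e : I -> X) :
  (forall i, S (e i)) -> g (\sum_(i <- r) c i *: e i) = \sum_(i <- r) c i *: g (e i).
Proof.
move=> Se; elim: r => [|i r IH]; first by rewrite !big_nil lin_on0.
by rewrite !big_cons glin ?IH //; apply: subspace_sum.
Qed.

End LinearOn.

Lemma linear_on_sub (R : realType) (X Y : lmodType R) (S T : set X) (g : X -> Y) :
  S `<=` T -> linear_on T g -> linear_on S g.
Proof. by move=> ST glin c u v Su Sv; apply: glin; apply: ST. Qed.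

Lemma compact_on_sub (R : realType) (X Y : lmodType R) (S T : set X)
    (f : X -> X -> R) (g : X -> Y) (b : Y -> Y -> R) :
  S `<=` T -> compact_on T f g b -> compact_on S f g b.
Proof. by move=> ST gcpt u Su; apply: gcpt => n; apply: ST. Qed.

Lemma fnorm_le_sq (R : realType) (X Y : lmodType R) (f : X -> X -> R)
    (b : Y -> Y -> R) x y c :
  0 <= c -> 0 <= b y y -> 0 <= f x x -> fnorm b y <= c * fnorm f x ->
  b y y <= c ^+ 2 * f x x.
Proof.
move=> c0 by0 fx0 le_norm.
rewrite -(sqr_sqrtr by0) -(sqr_sqrtr fx0) -exprMn.
by apply: lerXn2r => //; rewrite nnegrE ?mulr_ge0 ?sqrtr_ge0.
Qed.

(* Take s = q and t = p; if q = 0, the form forces y = 0 and then z <= 0. *)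
Lemma cross_term_le (R : realFieldType) (x z y p q c : R) :
  0 < p -> 0 <= q -> 0 <= c -> y <= c * q ->
  (forall s t, 2 * s * t * z <= s ^+ 2 * x + t ^+ 2 * y) ->
  2 * z <= x / p * q + c * p.
Proof.
move=> p0 q0 c0 ycq quad.
have [qpos|qle0] := ltrP 0 q.
  have qp0 : 0 < q * p by apply: mulr_gt0.
  rewrite -(ler_pM2l qp0).
  have -> : q * p * (x / p * q + c * p) = q ^+ 2 * x + p ^+ 2 * (c * q).
    by field; lra.
  have := quad q p; have : p ^+ 2 * y <= p ^+ 2 * (c * q).
    by rewrite ler_pM2l // exprn_gt0.
  lra.
have q00 : q = 0 by lra.
rewrite q00 mulr0 in ycq; rewrite q00 mulr0 add0r.
have y0 : y = 0.
  by have := quad 0 1; rewrite expr0n expr1n /= !mul0r mul1r; lra.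
have z0 : z <= 0.
  rewrite leNgt; apply/negP => zpos.
  have := quad 1 ((x + 1) / (2 * z)); rewrite y0 mulr0 addr0 expr1n mul1r.
  have -> : 2 * 1 * ((x + 1) / (2 * z)) * z = x + 1 by field; lra.
  lra.
have : 0 <= c * p by apply: mulr_ge0 => //; lra.
lra.
Qed.

(* Here x + 2 z + y stands for b(g u + g w, g u + g w) and p + q for
   a(u + w, u + w) with u, w orthogonal. *)
Lemma ratio_split_le (R : realFieldType) (x z y p q c : R) :
  0 < p -> 0 <= q -> 0 <= c -> y <= c * q ->
  (forall s t, 2 * s * t * z <= s ^+ 2 * x + t ^+ 2 * y) ->
  (x + 2 * z + y) / (p + q) <= x / p + c.
Proof.
move=> p0 q0 c0 ycq quad; have := cross_term_le p0 q0 c0 ycq quad.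
rewrite ler_pdivrMr; last lra.
have -> : (x / p + c) * (p + q) = x + x / p * q + c * p + c * q by field; lra.
lra.
Qed.

Lemma recip_ext_ge (R : realType) (mu muh c : R) :
  0 <= mu -> 0 < muh -> 0 <= c -> mu <= muh + c ->
  ((muh^-1 / (1 + c * muh^-1))%:E <= recip_ext mu)%E.
Proof.
move=> mu0 muh0 c0 le_mu; rewrite /recip_ext.
have [_|mu_neq0] := eqVneq mu 0; first exact: leey.
have mupos : 0 < mu by rewrite lt_neqAle eq_sym mu_neq0.
rewrite lee_fin.
have -> : muh^-1 / (1 + c * muh^-1) = (muh + c)^-1.
  by field; apply/andP; split; apply/negP => /eqP; lra.
by rewrite lef_pV2 ?posrE //; lra.
Qed.

Lemma inf_ge0 (R : realType) (E : set R) : lbound E 0 -> 0 <= inf E.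
Proof.
move=> E0; have [->|/set0P E_neq0] := eqVneq E set0; first by rewrite inf0.
exact: lb_le_inf.
Qed.

Lemma sup_ge0 (R : realType) (E : set R) : lbound E 0 -> 0 <= sup E.
Proof.
move=> E0; have [->|/set0P [x Ex]] := eqVneq E set0; first by rewrite sup0.
have [ubE|] := pselect (has_ubound E); last by move=> ?; rewrite sup_out // => -[].
exact: le_trans (E0 x Ex) (ub_le_sup ubE Ex).
Qed.

Lemma increasing_ge_id (phi : nat -> nat) :
  (forall n, (phi n < phi n.+1)%N) -> forall n, (n <= phi n)%N.
Proof. by move=> phi_incr; elim => // n IH; apply: leq_ltn_trans IH (phi_incr n). Qed.

Lemma independent_delta_neq0 (R : realType) (X : lmodType R) k (i0 : 'I_k)
    (e : 'I_k -> X) :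
  independent e -> \sum_(i < k) (i == i0)%:R *: e i != 0.
Proof.
move=> eind; apply/negP => /eqP e0; have := eind _ e0 i0.
by rewrite eqxx => /eqP; rewrite oner_eq0.
Qed.

Definition rayleigh_quotients (R : realType) (X Y : lmodType R) (A : X -> X -> R)
    (g : X -> Y) (b : Y -> Y -> R) (k : nat) (e : 'I_k -> X) : set R :=
  [set r : R | exists c : 'I_k -> R,
    let v := \sum_(i < k) c i *: e i in v != 0 /\ r = b (g v) (g v) / A v v].

Section Rayleigh.
Variables (R : realType) (X Y : lmodType R) (S : set X) (A : X -> X -> R)
  (g : X -> Y) (b : Y -> Y -> R).
Hypotheses (hS : subspace S) (Apsd : psd_on S A) (bpsd : forall y, 0 <= b y y).

Lemma rayleigh_quotients_lbound0 k (e : 'I_k -> X) :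
  (forall i, S (e i)) -> lbound (rayleigh_quotients A g b e) 0.
Proof.
move=> Se _ [c [_ ->]]; apply: divr_ge0 => //.
by apply: Apsd; apply: subspace_sum.
Qed.

Lemma rayleigh_inf_ge0 k (e : 'I_k -> X) :
  (forall i, S (e i)) -> 0 <= rayleigh_inf A g b e.
Proof. by move=> Se; apply/inf_ge0/rayleigh_quotients_lbound0. Qed.

Lemma minmax_ge0 k : 0 <= minmax S A g b k.
Proof. by apply: sup_ge0 => _ [e [Se _] <-]; apply: rayleigh_inf_ge0. Qed.

Lemma rayleigh_inf_le k (e : 'I_k -> X) (c : 'I_k -> R) :
  (forall i, S (e i)) -> let v := \sum_(i < k) c i *: e i in
  v != 0 -> rayleigh_inf A g b e <= b (g v) (g v) / A v v.
Proof.
move=> Se v v0; apply: ge_inf; last by exists c.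
by exists 0; apply: rayleigh_quotients_lbound0.
Qed.

Lemma rayleigh_inf_ge k (e : 'I_k -> X) m : (0 < k)%N -> independent e ->
  (forall c : 'I_k -> R, let v := \sum_(i < k) c i *: e i in
    v != 0 -> m <= b (g v) (g v) / A v v) ->
  m <= rayleigh_inf A g b e.
Proof.
move=> k0 eind le_m; apply: lb_le_inf; last by move=> _ [c [v0 ->]]; apply: le_m.
pose i0 : 'I_k := Ordinal k0; pose v := \sum_(i < k) (i == i0)%:R *: e i.
have v0 : v != 0 := independent_delta_neq0 i0 eind.
by exists (b (g v) (g v) / A v v), (fun i => (i == i0)%:R).
Qed.

Section Bounded.
Variable M : R.
Hypotheses (Apos : forall v, S v -> v != 0 -> 0 < A v v)
  (bounded : forall v, S v -> b (g v) (g v) <= M * A v v).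

Lemma rayleigh_inf_le_bound k (e : 'I_k -> X) :
  (0 < k)%N -> dim_family S e -> rayleigh_inf A g b e <= M.
Proof.
move=> k0 [Se eind]; pose i0 : 'I_k := Ordinal k0.
have v0 := independent_delta_neq0 i0 eind.
apply: le_trans (rayleigh_inf_le Se v0) _.
by rewrite ler_pdivrMr ?Apos ?bounded //; apply: subspace_sum.
Qed.

Lemma rayleigh_inf_le_minmax k (e : 'I_k -> X) :
  (0 < k)%N -> dim_family S e -> rayleigh_inf A g b e <= minmax S A g b k.
Proof.
move=> k0 Se; apply: ub_le_sup; last by exists e.
by exists M => _ [e' Se' <-]; apply: rayleigh_inf_le_bound.
Qed.

End Bounded.
End Rayleigh.

Section CompactBound.
Variables (R : realType) (X Y : lmodType R) (S : set X) (f : X -> X -> R)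
  (g : X -> Y) (b : Y -> Y -> R).
Hypotheses (hS : subspace S) (fip : inner_product_on S f)
  (bip : inner_product_on setT b) (glin : linear_on S g).

Lemma converges_to_sq_bounded (u : nat -> Y) y : converges_to b u y ->
  exists N, forall n, (N <= n)%N -> b (u n) (u n) <= 2 + 2 * b y y.
Proof.
case: bip => bsym bbil _; have bpsd := inner_product_psd (subspaceT Y) bip.
move=> /(_ 1 ltr01) [N cvgN]; exists N => n Nn.
have : b (u n - y) (u n - y) < 1.
  by rewrite -(ltr_sqrt _ ltr01) sqrtr1; apply: cvgN.
have := psd_sqD_le (subspaceT Y) bsym bbil bpsd (u := u n - y) (v := y) I I.
rewrite subrK; lra.
Qed.

Lemma normalized_unbounded :
  ~ (exists M, forall v, S v -> b (g v) (g v) <= M * f v v) ->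
  exists u : nat -> X, forall n,
    [/\ S (u n), f (u n) (u n) = 1 & n%:R < b (g (u n)) (g (u n))].
Proof.
case: fip => fsym fbil fpos.
move=> unbounded.
suff /choice[u hu] : forall n : nat, exists v,
  [/\ S v, f v v = 1 & n%:R < b (g v) (g v)] by exists u.
move=> n.
have [w [Sw lt_w]] : exists w, S w /\ n%:R * f w w < b (g w) (g w).
  apply: contrapT => bounded_n; apply: unbounded; exists n%:R => v Sv.
  by rewrite leNgt; apply/negP => lt_v; apply: bounded_n; exists v.
have fw0 : 0 < f w w.
  apply: fpos => //; apply/negP => /eqP w0; move: lt_w; case: bip => _ bbil _.
  have S0 : S 0 by case: hS.
  by rewrite w0 (lin_on0 hS glin) (bil0l (subspaceT Y) bbil) // (bil0l hS fbil)
    // mulr0 ltxx.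
pose s := Num.sqrt (f w w).
have s0 : 0 < s by rewrite sqrtr_gt0.
have s2 : s^-1 ^+ 2 * f w w = 1 by rewrite exprVn sqr_sqrtr ?mulVf ?gt_eqF ?ltW.
exists (s^-1 *: w); split; first exact: subspaceZ.
  by rewrite (bil_sqZ hS fsym fbil).
rewrite (lin_onZ hS glin) // (bil_sqZ (subspaceT Y)) //; try by case: bip.
by rewrite exprVn sqr_sqrtr ?ltW // ltr_pdivlMl // mulrC.
Qed.

(* A normalized sequence with unbounded quotients would have a convergent,
   hence eventually bounded, subsequence of images. *)
Lemma compact_rayleigh_bounded : compact_on S f g b ->
  exists M, forall v, S v -> b (g v) (g v) <= M * f v v.
Proof.
move=> gcpt; apply: contrapT => /normalized_unbounded [u hu].
have [phi [phi_incr [y cvg_y]]] : exists phi : nat -> nat,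
    (forall n, (phi n < phi n.+1)%N) /\
    exists y, converges_to b (fun n => g (u (phi n))) y.
  apply: gcpt => [n|]; first by case: (hu n).
  by exists 1 => n; rewrite /fnorm; case: (hu n) => _ -> _; rewrite sqrtr1.
have [N bounded_y] := converges_to_sq_bounded cvg_y.
pose m := maxn N (Num.Def.archi_bound (2 + 2 * b y y)).
have by0 := inner_product_sq_ge0 bip y.
have m_gt : 2 + 2 * b y y < m%:R.
  apply: lt_le_trans (archi_boundP _) _; first lra.
  by rewrite ler_nat leq_maxr.
have m_le : m%:R <= (phi m)%:R :> R by rewrite ler_nat increasing_ge_id.
have := bounded_y m (leq_maxl _ _); case: (hu (phi m)) => _ _; lra.
Qed.

End CompactBound.

Section Projection.
Variables (R : realType) (X : lmodType R) (T Vh : set X) (ah : X -> X -> R)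
  (P : X -> X).
Hypotheses (hT : subspace T) (hVh : subspace Vh) (VhT : Vh `<=` T)
  (ahsym : symmetric_on T ah) (ahbil : bilinear_on T ah)
  (ahip : inner_product_on Vh ah)
  (hP : forall u, T u -> Vh (P u) /\ forall w, Vh w -> ah (u - P u) w = 0).

Lemma proj_unique u z : T u -> Vh z ->
  (forall w, Vh w -> ah (u - z) w = 0) -> P u = z.
Proof.
move=> Tu Vhz z_orth; have [VhPu Pu_orth] := hP Tu.
have Vhd : Vh (P u - z) by apply: subspaceB.
have Tuz : T (u - z) by apply: subspaceB hT Tu (VhT Vhz).
have TuP : T (u - P u) by apply: subspaceB hT Tu (VhT VhPu).
have d_eq : P u - z = (u - z) - (u - P u).
  by rewrite opprB addrCA addrAC subrr add0r.
have ahd0 : ah (P u - z) (P u - z) = 0.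
  by rewrite {1}d_eq (bilBl hT ahbil) ?z_orth ?Pu_orth ?subrr //; apply: VhT.
apply/eqP; rewrite -subr_eq0; apply/negPn/negP => d0.
by case: ahip => _ _ ahpos; have := ahpos _ Vhd d0; rewrite ahd0 ltxx.
Qed.

Lemma proj_linear : linear_on T P.
Proof.
move=> c u v Tu Tv; have [VhPu Pu_orth] := hP Tu; have [VhPv Pv_orth] := hP Tv.
apply: proj_unique.
- exact: subspaceD hT (subspaceZ c hT Tu) Tv.
- exact: subspaceD hVh (subspaceZ c hVh VhPu) VhPv.
move=> w Vhw.
have -> : c *: u + v - (c *: P u + P v) = c *: (u - P u) + (v - P v).
  by rewrite scalerBr opprD addrACA.
have TuP : T (u - P u) by apply: subspaceB hT Tu (VhT VhPu).
have TvP : T (v - P v) by apply: subspaceB hT Tv (VhT VhPv).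
by rewrite ahbil ?Pu_orth ?Pv_orth ?mulr0 ?addr0 //; apply: VhT.
Qed.

Lemma proj_pythagoras v : T v ->
  ah v v = ah (P v) (P v) + ah (v - P v) (v - P v).
Proof.
move=> Tv; have [VhPv Pv_orth] := hP Tv; have TPv := VhT VhPv.
have TvP : T (v - P v) by apply: subspaceB.
have -> : ah v v = ah (P v + (v - P v)) (P v + (v - P v)) by rewrite addrC subrK.
by rewrite (bil_sqD hT ahsym ahbil) // (ahsym TPv TvP) Pv_orth // mulr0 addr0.
Qed.

End Projection.

Section MinmaxComparison.
Variables (R : realType) (X W : lmodType R) (V Vh T : set X) (a ah : X -> X -> R)
  (b : W -> W -> R) (gamma gammah : X -> W) (P : X -> X) (C : R).
Hypotheses (hV : subspace V) (hVh : subspace Vh) (hT : subspace T)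
  (VT : V `<=` T) (VhT : Vh `<=` T)
  (aip : inner_product_on V a) (bip : inner_product_on setT b)
  (ahsym : symmetric_on T ah) (ahbil : bilinear_on T ah) (ahpsd : psd_on T ah)
  (ahip : inner_product_on Vh ah) (ah_a : forall u v, V u -> V v -> ah u v = a u v)
  (gammah_lin : linear_on T gammah) (gammah_cpt : compact_on T ah gammah b)
  (gammah_gamma : forall u, V u -> gammah u = gamma u)
  (hP : forall u, T u -> Vh (P u) /\ forall w, Vh w -> ah (u - P u) w = 0)
  (C0 : 0 <= C)
  (hC : forall v, T v -> fnorm b (gammah (v - P v)) <= C * fnorm ah (v - P v)).

Let bpsd : forall y, 0 <= b y y := inner_product_sq_ge0 bip.

Lemma proj_defect_le v : T v ->
  b (gammah (v - P v)) (gammah (v - P v)) <= C ^+ 2 * ah (v - P v) (v - P v).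
Proof.
move=> Tv; have [VhPv _] := hP Tv.
apply: fnorm_le_sq => //; last exact: hC.
by apply: ahpsd; apply: subspaceB hT Tv (VhT VhPv).
Qed.

Lemma ratio_le_of_proj_eq0 v : V v -> v != 0 -> P v = 0 ->
  b (gamma v) (gamma v) / a v v <= C ^+ 2.
Proof.
move=> Vv v0 Pv0; case: aip => _ _ apos.
have := proj_defect_le (VT Vv); rewrite Pv0 subr0 gammah_gamma // ah_a //.
by rewrite ler_pdivrMr ?apos.
Qed.

Lemma ratio_le_proj v : V v -> P v != 0 ->
  b (gamma v) (gamma v) / a v v <=
  b (gammah (P v)) (gammah (P v)) / ah (P v) (P v) + C ^+ 2.
Proof.
move=> Vv Pv0; have Tv := VT Vv; have [VhPv _] := hP Tv.
have TPv := VhT VhPv.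
have TvP : T (v - P v) by apply: subspaceB.
have -> : gamma v = gammah (P v) + gammah (v - P v).
  by rewrite -gammah_gamma // -(lin_onD gammah_lin) // addrC subrK.
rewrite -ah_a // (proj_pythagoras hT VhT ahsym ahbil hP Tv).
rewrite (bil_sqD (subspaceT W)) //; try by case: bip.
apply: ratio_split_le; [by case: ahip => _ _; apply | exact: ahpsd |
  exact: sqr_ge0 | exact: proj_defect_le |].
move=> s t; apply: (psd_cross_le (subspaceT W)) => //; by case: bip.
Qed.

Lemma rayleigh_inf_le_minmax_h k (e : 'I_k -> X) : (0 < k)%N -> dim_family V e ->
  rayleigh_inf a gamma b e <= minmax Vh ah gammah b k + C ^+ 2.
Proof.
move=> k0 [Ve eind]; have apsd := inner_product_psd hV aip.
have muh0 : 0 <= minmax Vh ah gammah b k.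
  exact: (minmax_ge0 gammah hVh (inner_product_psd hVh ahip) bpsd).
have Plin : linear_on T P := proj_linear hT hVh VhT ahbil ahip hP.
have [[c [v0 Pv0]]|P_inj] := pselect (exists c : 'I_k -> R,
    \sum_(i < k) c i *: e i != 0 /\ P (\sum_(i < k) c i *: e i) = 0).
  apply: le_trans (rayleigh_inf_le gamma hV apsd bpsd Ve v0) _.
  apply: le_trans (ratio_le_of_proj_eq0 _ v0 Pv0) _; first exact: subspace_sum.
  by rewrite lerDr.
pose f i := P (e i).
have Pe c : P (\sum_(i < k) c i *: e i) = \sum_(i < k) c i *: f i.
  by apply: (lin_on_sum hT Plin) => i; apply: VT.
have Vhf i : Vh (f i) by case: (hP (VT (Ve i))).
have find : independent f.
  move=> c fc0; apply: eind; apply: contrapT => ec0; apply: P_inj.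
  by exists c; split; [apply/eqP | rewrite Pe].
have [M bounded] := compact_rayleigh_bounded hVh ahip bip
  (linear_on_sub VhT gammah_lin) (compact_on_sub VhT gammah_cpt).
apply: (@le_trans _ _ (rayleigh_inf ah gammah b f + C ^+ 2)); last first.
  rewrite lerD2r; apply: (rayleigh_inf_le_minmax hVh _ bpsd (M := M)) => //.
  - exact: inner_product_psd.
  - by case: ahip.
rewrite -lerBlDr; apply: rayleigh_inf_ge => // c /=; rewrite -Pe => Pv0.
rewrite lerBlDr; apply: le_trans (ratio_le_proj _ Pv0); last exact: subspace_sum.
apply: (rayleigh_inf_le gamma hV apsd bpsd Ve); apply: contra_neq Pv0 => ->.
exact: (lin_on0 hT Plin).
Qed.

Lemma minmax_le_minmax_h k : (0 < k)%N -> (exists e : 'I_k -> X, dim_family V e) ->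
  minmax V a gamma b k <= minmax Vh ah gammah b k + C ^+ 2.
Proof.
move=> k0 [e0 Ve0]; apply: ge_sup; first by exists (rayleigh_inf a gamma b e0), e0.
by move=> _ [e Ve <-]; apply: rayleigh_inf_le_minmax_h.
Qed.

End MinmaxComparison.

Theorem theorem3p1 (R : realType) (X W : lmodType R) (V Vh : set X) (d : nat)
    (a ah : X -> X -> R) (b : W -> W -> R) (gamma gammah : X -> W)
    (Ph : X -> X) (Ch : R) :
  subspace V -> subspace Vh -> (exists e : 'I_d -> X, basis_of_set Vh e) ->
  inner_product_on V a -> complete_on V a -> separable_on V a ->
  inner_product_on setT b -> complete_on setT b -> separable_on setT b ->
  linear_on V gamma -> compact_on V a gamma b ->
  let Vt := sumset V Vh in
  symmetric_on Vt ah -> bilinear_on Vt ah -> psd_on Vt ah ->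
  inner_product_on Vh ah ->
  (forall u v, V u -> V v -> ah u v = a u v) ->
  linear_on Vt gammah -> compact_on Vt ah gammah b ->
  (forall u, V u -> gammah u = gamma u) ->
  (forall u, Vt u -> Vh (Ph u) /\ forall w, Vh w -> ah (u - Ph u) w = 0) ->
  0 <= Ch ->
  (forall v, Vt v -> fnorm b (gammah (v - Ph v)) <= Ch * fnorm ah (v - Ph v)) ->
  forall k : nat, (1 <= k <= d)%N -> (exists e : 'I_k -> X, dim_family V e) ->
    minmax V a gamma b k <= minmax Vh ah gammah b k + Ch ^+ 2 /\
    (0 < minmax Vh ah gammah b k ->
      let lamh := (minmax Vh ah gammah b k)^-1 in
      ((lamh / (1 + Ch ^+ 2 * lamh))%:E <= recip_ext (minmax V a gamma b k))%E).
Proof.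
move=> hV hVh _ aip _ _ bip _ _ _ _ Vt ahsym ahbil ahpsd ahip ah_a gammah_lin
  gammah_cpt gammah_gamma hP C0 hC k /andP[k0 _] hk.
have hVt : subspace Vt := subspace_sumset hV hVh.
have mu_le := minmax_le_minmax_h hV hVh hVt (sumsetl hVh) (sumsetr hV) aip bip
  ahsym ahbil ahpsd ahip ah_a gammah_lin gammah_cpt gammah_gamma hP C0 hC k0 hk.
split => // muh0 /=; apply: recip_ext_ge => //; last exact: sqr_ge0.
exact: (minmax_ge0 gamma hV (inner_product_psd hV aip) (inner_product_sq_ge0 bip)).
Qed.
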